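(* Let $\alpha\in(0,1]$, $\gamma\geqslant0$, and let $g,g_0,g_1:(0,\infty)^2\to\mathbb{R}$ with $g>0$, $g_0\geqslant0$, $g_1\geqslant0$, $g=g_0+g_1$, such that (i) $e^{\gamma(x+y)}g(x,y)=e^{\gamma(1/x+1/y)}g(1/x,1/y)$ for all $x,y>0$; (ii) $g_1(x,y)\leqslant e^{-\alpha\gamma(x-x')}g_1(x',y)$ for all $0<x'\leqslant x$, $y>0$, and $g_1(x,y)\leqslant e^{-\alpha\gamma(y-y')}g_1(x,y')$ for all $0<y'\leqslant y$, $x>0$. Then for every $(x,y)\in\Omega_\alpha$ the algorithm $\mathsf{B}_\alpha$ (see context) started at $(x,y)$ is well defined and stops after a finite number $N$ of points $(x_1,y_1),\dots,(x_N,y_N)$, and $$g(x,y)\leqslant\sum_{i=1}^N g_0(x_i,y_i)+g_1(x_N,y_N).$$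
   Context: Let $f_\alpha(x)=\max\left\{\frac1x,\ \frac12\left(\alpha(2-x)+\sqrt{\alpha^2(2-x)^2+4(1-\alpha)}\right)\right\}$ and $\Omega_\alpha=\{(x,y): x>1,\ y>f_\alpha(x)\}\cup\{(x,y): y>1,\ x>f_\alpha(y)\}$. Algorithm $\mathsf{B}_\alpha$: set $(x_1,y_1)=(x,y)$. Given $(a,b)=(x_i,y_i)$: (1) if $a>1$ and $b>1$, stop and set $N=i$. (2) If $a\leqslant1$: put $\tilde a=a$ if $a<1$ and $\tilde a=\frac{2}{\alpha(b-1)+2}$ if $a=1$; let $s>0$ be the unique positive solution of $\alpha b+\tilde a-\frac1{\tilde a}+(1-\alpha)s-\frac1s=0$; set $(x_{i+1},y_{i+1})=(1/\tilde a,\ 1/s)$. (3) Otherwise ($a>1$, $b\leqslant1$): same with the roles of the two coordinates exchanged, i.e. $\tilde b=b$ if $b<1$, $\tilde b=\frac{2}{\alpha(a-1)+2}$ if $b=1$, $s>0$ the unique positive solution of $\alpha a+\tilde b-\frac1{\tilde b}+(1-\alpha)s-\frac1s=0$, and $(x_{i+1},y_{i+1})=(1/s,\ 1/\tilde b)$. *)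

From Stdlib Require Import Reals.
Open Scope R_scope.

Definition f_alpha (alpha x : R) : R :=
  Rmax (1 / x)
       ((alpha * (2 - x) + sqrt (alpha ^ 2 * (2 - x) ^ 2 + 4 * (1 - alpha))) / 2).

Definition Omega (alpha x y : R) : Prop :=
  (1 < x /\ f_alpha alpha x < y) \/ (1 < y /\ f_alpha alpha y < x).

(* the modified coordinate: a~ = a if a < 1, and 2/(alpha(b-1)+2) if a = 1
   (only used when a <= 1) *)
Definition tilde (alpha a b : R) : R :=
  if Rlt_dec a 1 then a else 2 / (alpha * (b - 1) + 2).

Definition B_eqn (alpha b at_ s : R) : Prop :=
  alpha * b + at_ - 1 / at_ + (1 - alpha) * s - 1 / s = 0.

Definition B_step (alpha : R) (p q : R * R) : Prop :=
  let a := fst p in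
  let b := snd p in
  if Rle_dec a 1 then
    let at_ := tilde alpha a b in
    (exists! s, 0 < s /\ B_eqn alpha b at_ s) /\
    (exists s, 0 < s /\ B_eqn alpha b at_ s /\ q = (1 / at_, 1 / s))
  else if Rle_dec b 1 then
    let bt_ := tilde alpha b a in
    (exists! s, 0 < s /\ B_eqn alpha a bt_ s) /\
    (exists s, 0 < s /\ B_eqn alpha a bt_ s /\ q = (1 / s, 1 / bt_))
  else False.

Definition B_stop (p : R * R) : Prop := 1 < fst p /\ 1 < snd p.

From Stdlib Require Import Reals Lra Psatz Lia.
Open Scope R_scope.

(* Put psi t = t - (1 - alpha) / t, increasing on (0, oo).  The equation of B_alpha reads
   psi (1/s) = alpha b + a~ - 1/a~, so each new coordinate is psi^-1 of an explicit value.
   Call a point with coordinates p <= 1 and q (in either order) "active" if p q > 1 and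
   L(p, q) = psi p + alpha q - 2 alpha > 0; the points of Omega_alpha outside the stopping
   quadrant are exactly the active ones, since f_alpha x = max (1/x, psi^-1 (alpha (2 - x))).
   From an active point one step either stops or reaches the active point (p', 1/p) with
   p' > p, the same value of L, and psi p' = psi p + alpha (q - 1/p).  On a level set of L
   the gain alpha (q - 1/p) is bounded below by concavity, while psi p <= psi 1 = alpha, so
   the algorithm stops.  For the bound, (ii) moves from (p, q) down to (a~, s), (i) jumps to
   (1/a~, 1/s), and by the equation the exponentials cancel up to exp (alpha gamma (a~ - p)) <= 1;
   so g1 at each point is at most g at the next one, and g = g0 + g1 telescopes. *)

Lemma quadratic_ge_min (b c u v w : R) : u <= v <= w ->
  Rmin (b * u + c - u ^ 2) (b * w + c - w ^ 2) <= b * v + c - v ^ 2.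
Proof.
  intros [Huv Hvw].
  pose proof (Rmin_l (b * u + c - u ^ 2) (b * w + c - w ^ 2)) as Hu.
  pose proof (Rmin_r (b * u + c - u ^ 2) (b * w + c - w ^ 2)) as Hw.
  set (m := Rmin _ _) in *.
  destruct (Req_dec u w) as [<- | Hne]; [replace v with u by lra; lra|].
  apply Rmult_le_reg_r with (w - u); [lra|].
  replace ((b * v + c - v ^ 2) * (w - u)) with
    ((w - v) * (b * u + c - u ^ 2) + (v - u) * (b * w + c - w ^ 2)
     + (v - u) * (w - v) * (w - u)) by ring.
  assert (0 <= (v - u) * (w - v) * (w - u)) by (apply Rmult_le_pos; [apply Rmult_le_pos|]; lra).
  nra.
Qed.

Section Algorithm.

Variable a : R.
Hypothesis Ha : 0 < a <= 1.

Definition psi (t : R) : R := t - (1 - a) / t.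

Lemma psi_lt x y : 0 < x -> x < y -> psi x < psi y.
Proof.
  intros Hx Hxy; unfold psi, Rdiv.
  assert (/ y < / x) by (apply Rinv_lt_contravar; nra).
  nra.
Qed.

Lemma psi_lt_inv x y : 0 < x -> 0 < y -> psi x < psi y -> x < y.
Proof.
  intros Hx Hy H; destruct (Rtotal_order x y) as [Hxy | [Hxy | Hxy]]; auto.
  - subst; lra.
  - pose proof (psi_lt y x Hy Hxy); lra.
Qed.

Lemma psi_inj x y : 0 < x -> 0 < y -> psi x = psi y -> x = y.
Proof.
  intros Hx Hy H; destruct (Rtotal_order x y) as [Hxy | [Hxy | Hxy]]; auto.
  - pose proof (psi_lt x y Hx Hxy); lra.
  - pose proof (psi_lt y x Hy Hxy); lra.
Qed.

Lemma psi_le_a t : 0 < t <= 1 -> psi t <= a.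
Proof.
  intros [Ht [Ht1 | ->]].
  - pose proof (psi_lt t 1 Ht Ht1) as Hlt; unfold psi at 2 in Hlt; lra.
  - unfold psi; lra.
Qed.

(* the larger root of [t^2 - c t - (1 - a)], i.e. the inverse of [psi] *)
Definition psi_root (c : R) : R := (c + sqrt (c ^ 2 + 4 * (1 - a))) / 2.

Lemma psi_root_sq c : sqrt (c ^ 2 + 4 * (1 - a)) ^ 2 = c ^ 2 + 4 * (1 - a).
Proof. rewrite <- Rsqr_pow2, Rsqr_sqrt; nra. Qed.

Lemma psi_root_spec c : (a < 1 \/ 0 < c) -> 0 < psi_root c /\ psi (psi_root c) = c.
Proof.
  intros Hc; unfold psi_root.
  pose proof (psi_root_sq c) as HS2; pose proof (sqrt_pos (c ^ 2 + 4 * (1 - a))) as HS0.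
  set (S := sqrt (c ^ 2 + 4 * (1 - a))) in *.
  assert (Hpos : 0 < c + S) by (destruct Hc; nra).
  set (r := (c + S) / 2).
  assert (Hr : r * r - c * r = 1 - a) by (unfold r; nra).
  split; [unfold r; lra|].
  unfold psi; rewrite <- Hr; field; unfold r; lra.
Qed.

Lemma psi_gt_of_root_lt c y : 0 < y -> psi_root c < y -> c < psi y.
Proof.
  intros Hy Hr; unfold psi_root in Hr.
  pose proof (psi_root_sq c) as HS2; pose proof (sqrt_pos (c ^ 2 + 4 * (1 - a))) as HS0.
  set (S := sqrt (c ^ 2 + 4 * (1 - a))) in *.
  assert (0 < (y - (c + S) / 2) * (y - (c - S) / 2)) by (apply Rmult_lt_0_compat; lra).
  assert (c * y < y * y - (1 - a)) by nra.
  unfold psi; apply Rmult_lt_reg_r with y; [lra|].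
  field_simplify; lra.
Qed.

Lemma psi_root_gt p c : 0 < p -> psi p < c -> p < psi_root c /\ psi (psi_root c) = c.
Proof.
  intros Hp Hc.
  assert (Hac : a < 1 \/ 0 < c).
  { destruct (Rlt_le_dec a 1) as [H | H]; [now left | right].
    unfold psi in Hc; replace (1 - a) with 0 in Hc by lra; unfold Rdiv in Hc; lra. }
  destruct (psi_root_spec c Hac) as [Hr Hpsi].
  split; [apply psi_lt_inv; lra | exact Hpsi].
Qed.

Lemma B_eqn_psi b A s : 0 < s -> B_eqn a b A s <-> psi (1 / s) = a * b + A - 1 / A.
Proof.
  intros Hs; unfold B_eqn, psi.
  replace ((1 - a) / (1 / s)) with ((1 - a) * s) by (field; lra).
  split; intros; lra.
Qed.

Lemma tilde_spec p q : 0 < p <= 1 -> 1 < p * q ->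
  0 < tilde a p q < 1 /\ tilde a p q <= p /\
  psi p < a * q + tilde a p q - 1 / tilde a p q.
Proof.
  intros [Hp Hp1] Hpq; unfold tilde.
  destruct (Rlt_dec p 1) as [Hlt | Hge].
  - split; [lra | split; [lra|]].
    unfold psi; apply Rmult_lt_reg_r with p; [lra|].
    field_simplify; nra.
  - assert (p = 1) by lra; subst p.
    set (k := a * (q - 1) + 2).
    assert (Hk : 2 < k) by (unfold k; nra).
    split; [split; [apply Rdiv_lt_0_compat | apply Rmult_lt_reg_r with k; field_simplify]; lra|].
    split; [apply Rmult_le_reg_r with k; [|field_simplify]; lra|].
    replace (a * q + 2 / k - 1 / (2 / k)) with (psi 1 + (k - 2) ^ 2 / (2 * k))
      by (unfold psi, k in *; field; lra).
    assert (0 < (k - 2) ^ 2 / (2 * k)) by (apply Rdiv_lt_0_compat; nra).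
    lra.
Qed.

Definition next_coord (p q : R) : R :=
  psi_root (a * q + tilde a p q - 1 / tilde a p q).

Lemma next_coord_spec p q : 0 < p <= 1 -> 1 < p * q ->
  p < next_coord p q /\
  psi (next_coord p q) = a * q + tilde a p q - 1 / tilde a p q.
Proof.
  intros Hp Hpq; destruct (tilde_spec p q Hp Hpq) as [_ [_ Hc]].
  apply psi_root_gt; lra.
Qed.

Lemma B_step_next p q : 0 < p <= 1 -> 1 < p * q ->
  B_step a (p, q) (1 / tilde a p q, next_coord p q) /\
  B_step a (q, p) (next_coord p q, 1 / tilde a p q).
Proof.
  intros Hp Hpq.
  destruct (tilde_spec p q Hp Hpq) as [HA _].
  destruct (next_coord_spec p q Hp Hpq) as [Ht Hpsi].
  assert (Hq : 1 < q) by nra.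
  set (A := tilde a p q) in *; set (t := next_coord p q) in *.
  assert (Hsol : forall s, 0 < s /\ B_eqn a q A s <-> s = 1 / t).
  { intros s; split.
    - intros [Hs Heq]; apply (B_eqn_psi q A s Hs) in Heq.
      rewrite <- Hpsi in Heq; apply psi_inj in Heq; [|apply Rdiv_lt_0_compat|]; try lra.
      rewrite <- Heq; field; lra.
    - intros ->; assert (Ht0 : 0 < 1 / t) by (apply Rdiv_lt_0_compat; lra).
      split; [exact Ht0|]; apply (B_eqn_psi q A _ Ht0).
      replace (1 / (1 / t)) with t by (field; lra); exact Hpsi. }
  assert (Hunique : exists! s, 0 < s /\ B_eqn a q A s).
  { exists (1 / t); split; [now apply Hsol|].
    intros s Hs; symmetry; now apply Hsol. }
  assert (Hinv : t = 1 / (1 / t)) by (field; lra).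
  unfold B_step; cbn [fst snd]; fold A.
  destruct (Rle_dec p 1) as [_ | Hn]; [|lra].
  destruct (Rle_dec q 1) as [Hn | _]; [lra|].
  assert (Hwit : 0 < 1 / t /\ B_eqn a q A (1 / t)) by now apply Hsol.
  split; split; try exact Hunique; exists (1 / t); rewrite <- Hinv; tauto.
Qed.

Definition level (p q : R) : R := psi p + a * q - 2 * a.

Definition active (p q : R) : Prop := 0 < p <= 1 /\ 1 < p * q /\ 0 < level p q.

Lemma active_next p q : active p q -> next_coord p q <= 1 ->
  active (next_coord p q) (1 / p) /\
  level (next_coord p q) (1 / p) = level p q /\
  psi (next_coord p q) = psi p + a * (q - 1 / p).
Proof.
  intros [Hp [Hpq Hlev]] Ht1.
  destruct (next_coord_spec p q Hp Hpq) as [Ht Hpsi].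
  assert (HA : tilde a p q = p) by (unfold tilde; destruct (Rlt_dec p 1); lra).
  rewrite HA in Hpsi.
  assert (Hgain : psi (next_coord p q) = psi p + a * (q - 1 / p))
    by (rewrite Hpsi; unfold psi; field; lra).
  assert (Hlevel : level (next_coord p q) (1 / p) = level p q)
    by (unfold level; rewrite Hgain; field; lra).
  repeat split; try lra.
  apply Rmult_lt_reg_r with p; [lra|]; field_simplify; lra.
Qed.

Lemma gain_ge_min p0 q0 p q : active p0 q0 -> 0 < p <= 1 -> p0 <= p ->
  level p q = level p0 q0 -> Rmin (a * (p0 * q0 - 1)) (level p0 q0) <= a * (q - 1 / p).
Proof.
  intros [Hp0 [Hpq0 Hlev0]] Hp Hp0p Hlev.
  set (d := level p0 q0) in *.
  (* on the level set [level t r = d], [a (t r - 1)] is a concave quadratic in [t] *)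
  assert (HF : forall t r, 0 < t -> level t r = d ->
                 (d + 2 * a) * t + (1 - 2 * a) - t ^ 2 = a * (t * r - 1)).
  { intros t r Ht Hd; rewrite <- Hd; unfold level, psi; field; lra. }
  pose proof (quadratic_ge_min (d + 2 * a) (1 - 2 * a) p0 p 1 ltac:(lra)) as Hmin.
  rewrite (HF p0 q0 ltac:(lra) eq_refl), (HF p q ltac:(lra) Hlev) in Hmin.
  replace ((d + 2 * a) * 1 + (1 - 2 * a) - 1 ^ 2) with d in Hmin by ring.
  assert (0 < Rmin (a * (p0 * q0 - 1)) d) by (apply Rmin_glb_lt; nra).
  assert (a * (p * q - 1) <= a * (q - 1 / p)); [|lra].
  replace (a * (q - 1 / p)) with (a * (p * q - 1) / p) by (field; lra).
  apply Rmult_le_reg_r with p; [lra|]; field_simplify; nra.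
Qed.

Lemma f_alpha_psi_root x : f_alpha a x = Rmax (1 / x) (psi_root (a * (2 - x))).
Proof. unfold f_alpha, psi_root; now rewrite Rpow_mult_distr. Qed.

Lemma active_of_f_alpha_lt x y : 1 < x -> f_alpha a x < y -> y <= 1 -> active y x.
Proof.
  intros Hx Hf Hy; rewrite f_alpha_psi_root in Hf; apply Rmax_Rlt in Hf as [Hinv Hroot].
  assert (Hy0 : 0 < y) by (assert (0 < 1 / x) by (apply Rdiv_lt_0_compat; lra); lra).
  apply psi_gt_of_root_lt in Hroot; [|exact Hy0].
  repeat split; try lra; [|unfold level; lra].
  apply Rmult_lt_reg_r with (1 / x); [apply Rdiv_lt_0_compat; lra|].
  field_simplify; lra.
Qed.

Lemma Omega_cases x y : Omega a x y -> (1 < x /\ 1 < y) \/ active x y \/ active y x.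
Proof.
  intros [[Hx Hf] | [Hy Hf]].
  - destruct (Rlt_le_dec 1 y); [now left | right; right; now apply active_of_f_alpha_lt].
  - destruct (Rlt_le_dec 1 x); [now left | right; left; now apply active_of_f_alpha_lt].
Qed.

Record weights (gamma : R) (g g0 g1 : R -> R -> R) : Prop := {
  weights_gamma : 0 <= gamma;
  weights_pos : forall x y, 0 < x -> 0 < y -> 0 < g x y;
  weights_g0 : forall x y, 0 < x -> 0 < y -> 0 <= g0 x y;
  weights_sum : forall x y, 0 < x -> 0 < y -> g x y = g0 x y + g1 x y;
  weights_inv : forall x y, 0 < x -> 0 < y ->
    exp (gamma * (x + y)) * g x y = exp (gamma * (1 / x + 1 / y)) * g (1 / x) (1 / y);
  weights_mono1 : forall x x' y, 0 < x' -> x' <= x -> 0 < y ->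
    g1 x y <= exp (- a * gamma * (x - x')) * g1 x' y;
  weights_mono2 : forall x y y', 0 < y' -> y' <= y -> 0 < x ->
    g1 x y <= exp (- a * gamma * (y - y')) * g1 x y' }.

Lemma weights_swap gamma g g0 g1 : weights gamma g g0 g1 ->
  weights gamma (fun x y => g y x) (fun x y => g0 y x) (fun x y => g1 y x).
Proof.
  intros [Hgamma Hpos Hg0 Hsum Hinv Hmono1 Hmono2]; split; intros; auto.
  rewrite (Rplus_comm x), (Rplus_comm (1 / x)); auto.
Qed.

Lemma g1_le_g_inv gamma g g0 g1 p q A s : weights gamma g g0 g1 ->
  0 < A <= p -> 0 < s <= q -> B_eqn a q A s -> g1 p q <= g (1 / A) (1 / s).
Proof.
  intros [Hgamma Hpos Hg0 Hsum Hinvol Hmono1 Hmono2] HA Hs Heq.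
  assert (HG : 0 < g (1 / A) (1 / s)) by (apply Hpos; apply Rdiv_lt_0_compat; lra).
  assert (Hinv : g A s = exp (gamma * (1 / A + 1 / s) - gamma * (A + s)) * g (1 / A) (1 / s)).
  { apply Rmult_eq_reg_l with (exp (gamma * (A + s))); [|apply Rgt_not_eq, exp_pos].
    rewrite Hinvol by lra; unfold Rminus; rewrite exp_plus, exp_Ropp.
    field; apply Rgt_not_eq, exp_pos. }
  assert (Hchain : g1 p q <= exp (- a * gamma * (p - A)) * (exp (- a * gamma * (q - s)) * g A s)).
  { eapply Rle_trans; [apply (Hmono1 p A q); lra|].
    apply Rmult_le_compat_l; [left; apply exp_pos|].
    eapply Rle_trans; [apply (Hmono2 A q s); lra|].
    apply Rmult_le_compat_l; [left; apply exp_pos|].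
    rewrite Hsum by lra; pose proof (Hg0 A s ltac:(lra) ltac:(lra)); lra. }
  rewrite Hinv, <- !Rmult_assoc, <- !exp_plus in Hchain.
  (* by [B_eqn] the total exponent collapses to [a gamma (A - p) <= 0] *)
  unfold B_eqn in Heq.
  replace (- a * gamma * (p - A) + - a * gamma * (q - s) + (gamma * (1 / A + 1 / s) - gamma * (A + s)))
    with (a * gamma * (A - p) - gamma * (a * q + A - 1 / A + (1 - a) * s - 1 / s)) in Hchain
    by ring.
  rewrite Heq, Rmult_0_r, Rminus_0_r in Hchain.
  assert (Hexp : exp (a * gamma * (A - p)) <= exp 0).
  { destruct (Req_dec (a * gamma * (A - p)) 0) as [-> | Hne]; [lra|].
    left; apply exp_increasing; assert (0 <= a * gamma) by nra; nra. }
  rewrite exp_0 in Hexp; nra.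
Qed.

Section Run.

Variables (gamma : R) (g g0 g1 : R -> R -> R).
Hypothesis W : weights gamma g g0 g1.

Definition bounded_run (x y : R) : Prop :=
  exists (N : nat) (pts : nat -> R * R),
    (1 <= N)%nat /\
    pts 0%nat = (x, y) /\
    (forall i, (i + 1 < N)%nat -> B_step a (pts i) (pts (S i))) /\
    B_stop (pts (N - 1)%nat) /\
    g x y <= sum_f_R0 (fun i => g0 (fst (pts i)) (snd (pts i))) (N - 1)
             + g1 (fst (pts (N - 1)%nat)) (snd (pts (N - 1)%nat)).

Lemma bounded_run_stop x y : 1 < x -> 1 < y -> bounded_run x y.
Proof.
  intros Hx Hy; exists 1%nat, (fun _ => (x, y)).
  repeat split; cbn; try lia; try lra.
  rewrite (weights_sum _ _ _ _ W) by lra; lra.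
Qed.

Lemma bounded_run_cons x y x' y' : 0 < x -> 0 < y ->
  B_step a (x, y) (x', y') -> g1 x y <= g x' y' -> bounded_run x' y' -> bounded_run x y.
Proof.
  intros Hx Hy Hstep Hg [N [pts [HN [H0 [Hsteps [Hstop Hbound]]]]]].
  exists (S N), (fun i => match i with O => (x, y) | S j => pts j end).
  split; [lia|]; split; [reflexivity|]; split.
  - intros [|i] Hi; [now rewrite H0 | apply Hsteps; lia].
  - destruct N as [|N]; [lia|].
    replace (S (S N) - 1)%nat with (S N) by lia.
    replace (S N - 1)%nat with N in Hstop, Hbound by lia.
    split; [exact Hstop|].
    rewrite decomp_sum by lia; cbn [pred fst snd].
    rewrite (weights_sum _ _ _ _ W) by lra; lra.
Qed.

Lemma bounded_run_next p q : 0 < p <= 1 -> 1 < p * q ->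
  (bounded_run (1 / tilde a p q) (next_coord p q) -> bounded_run p q) /\
  (bounded_run (next_coord p q) (1 / tilde a p q) -> bounded_run q p).
Proof.
  intros Hp Hpq.
  destruct (B_step_next p q Hp Hpq) as [Hstep Hstep'].
  destruct (tilde_spec p q Hp Hpq) as [HA [HAp _]].
  destruct (next_coord_spec p q Hp Hpq) as [Ht Hpsi].
  set (A := tilde a p q) in *; set (t := next_coord p q) in *.
  assert (Hs : 0 < 1 / t <= q).
  { split; [apply Rdiv_lt_0_compat; lra|].
    apply Rmult_le_reg_r with t; [lra|]; field_simplify; nra. }
  assert (Heq : B_eqn a q A (1 / t)).
  { apply B_eqn_psi; [lra|]. now replace (1 / (1 / t)) with t by (field; lra). }
  assert (Hinv : 1 / (1 / t) = t) by (field; lra).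
  pose proof (g1_le_g_inv _ _ _ _ p q A (1 / t) W ltac:(lra) Hs Heq) as Hg.
  pose proof (g1_le_g_inv _ _ _ _ p q A (1 / t) (weights_swap _ _ _ _ W)
                ltac:(lra) Hs Heq) as Hg'.
  cbv beta in Hg'; rewrite Hinv in Hg, Hg'.
  assert (Hq : 1 < q) by nra.
  split; intros Hrun; eapply bounded_run_cons; eauto; lra.
Qed.

Lemma bounded_run_level p0 q0 n : active p0 q0 ->
  forall p q, active p q -> p0 <= p -> level p q = level p0 q0 ->
  a - psi p < INR n * Rmin (a * (p0 * q0 - 1)) (level p0 q0) ->
  bounded_run p q /\ bounded_run q p.
Proof.
  intros Hact0; induction n as [|n IH]; intros p q Hact Hp0p Hlev Hn.
  - pose proof (psi_le_a p (proj1 Hact)); cbn in Hn; lra.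
  - pose proof Hact as [Hp [Hpq _]].
    destruct (bounded_run_next p q Hp Hpq) as [Hrun Hrun'].
    destruct (tilde_spec p q Hp Hpq) as [HA _].
    destruct (next_coord_spec p q Hp Hpq) as [Ht _].
    destruct (Rlt_le_dec 1 (next_coord p q)) as [Hstop | Ht1].
    + assert (1 < 1 / tilde a p q)
        by (apply Rmult_lt_reg_r with (tilde a p q); [|field_simplify]; lra).
      split; [apply Hrun | apply Hrun']; apply bounded_run_stop; lra.
    + destruct (active_next p q Hact Ht1) as [Hact' [Hlev' Hgain]].
      assert (HA1 : tilde a p q = p)
        by (unfold tilde; destruct (Rlt_dec p 1); lra).
      pose proof (gain_ge_min p0 q0 p q Hact0 Hp Hp0p Hlev).
      rewrite S_INR in Hn.
      rewrite HA1 in Hrun, Hrun'.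
      destruct (IH _ _ Hact') as [IH1 IH2]; try lra.
      split; [apply Hrun | apply Hrun']; assumption.
Qed.

Lemma bounded_run_active p q : active p q -> bounded_run p q /\ bounded_run q p.
Proof.
  intros Hact; pose proof Hact as [_ [Hpq Hlev]].
  assert (Hdelta : 0 < Rmin (a * (p * q - 1)) (level p q)) by (apply Rmin_glb_lt; nra).
  destruct (INR_unbounded ((a - psi p) / Rmin (a * (p * q - 1)) (level p q))) as [n Hn].
  apply (bounded_run_level p q n); auto; try lra.
  apply Rmult_lt_reg_r with (/ Rmin (a * (p * q - 1)) (level p q)); [now apply Rinv_0_lt_compat|].
  rewrite Rmult_assoc, Rinv_r; lra.
Qed.

End Run.

End Algorithm.

Theorem lemma1 (alpha gamma : R) (g g0 g1 : R -> R -> R)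
  (Halpha : 0 < alpha <= 1) (Hgamma : 0 <= gamma)
  (Hgpos : forall x y, 0 < x -> 0 < y -> 0 < g x y)
  (Hg0 : forall x y, 0 < x -> 0 < y -> 0 <= g0 x y)
  (Hg1 : forall x y, 0 < x -> 0 < y -> 0 <= g1 x y)
  (Hsum : forall x y, 0 < x -> 0 < y -> g x y = g0 x y + g1 x y)
  (Hi : forall x y, 0 < x -> 0 < y ->
     exp (gamma * (x + y)) * g x y = exp (gamma * (1 / x + 1 / y)) * g (1 / x) (1 / y))
  (Hii1 : forall x x' y, 0 < x' -> x' <= x -> 0 < y ->
     g1 x y <= exp (- alpha * gamma * (x - x')) * g1 x' y)
  (Hii2 : forall x y y', 0 < y' -> y' <= y -> 0 < x ->
     g1 x y <= exp (- alpha * gamma * (y - y')) * g1 x y') :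
  forall x y, Omega alpha x y ->
  exists (N : nat) (pts : nat -> R * R),
    (1 <= N)%nat /\
    pts 0%nat = (x, y) /\
    (forall i, (i + 1 < N)%nat -> B_step alpha (pts i) (pts (S i))) /\
    B_stop (pts (N - 1)%nat) /\
    g x y <= sum_f_R0 (fun i => g0 (fst (pts i)) (snd (pts i))) (N - 1)
             + g1 (fst (pts (N - 1)%nat)) (snd (pts (N - 1)%nat)).
Proof.
  intros x y HOmega.
  pose proof (Build_weights alpha gamma g g0 g1 Hgamma Hgpos Hg0 Hsum Hi Hii1 Hii2) as W.
  fold (bounded_run alpha g g0 g1 x y).
  destruct (Omega_cases alpha Halpha x y HOmega) as [[Hx Hy] | [Hact | Hact]].
  - exact (bounded_run_stop _ _ _ _ _ W x y Hx Hy).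
  - exact (proj1 (bounded_run_active _ Halpha _ _ _ _ W x y Hact)).
  - exact (proj2 (bounded_run_active _ Halpha _ _ _ _ W y x Hact)).
Qed.
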